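(* Let $\Sigma$ be a signature, $T$ a monad on sets carrying a continuous $\Sigma$-algebra structure, and $\Gamma$ a relator for the monad $T$ that is inductive and respects $\Sigma$. Then applicative $\Gamma$-similarity $\precsim_\Gamma$ is a precongruence (i.e. its open extension $\precsim_\Gamma^\circ$ is a compatible preorder), and it is sound for the $\Gamma$-contextual preorder: $\precsim_\Gamma^\circ\subseteq\ \leq_\Gamma$.
   Context: An $\omega$CPPO is a poset with least element $\bot$ in which every $\omega$-chain has a lub; continuous = monotone and preserving such lubs. $T$ (unit $\eta$, bind $u\texttt{>>=}f$) carries a continuous $\Sigma$-algebra structure if each $TX$ is an $\omega$CPPO, bind is continuous in both arguments, and each $\sigma\in\Sigma$ of arity $k$ is interpreted by a continuous $\sigma^T:(TX)^k\to TX$. A relator $\Gamma$ for $T$ assigns to each $R\subseteq X\times Y$ a relation $\Gamma R\subseteq TX\times TY$ with: $=_{TX}\subseteq\Gamma(=_X)$; $\Gamma S\circ\Gamma R\subseteq\Gamma(S\circ R)$; $\Gamma((f\times g)^{-1}R)=(Tf\times Tg)^{-1}\Gamma R$ where $(f\times g)^{-1}R=\{(z,w)\mid f(z)\,R\,g(w)\}$; monotone in $R$; $x\,R\,y\Rightarrow\eta(x)\,\Gamma R\,\eta(y)$; and if $x\,R\,y\Rightarrow f(x)\,\Gamma S\,g(y)$ for all $x,y$ then $u\,\Gamma R\,v\Rightarrow(u\texttt{>>=}f)\,\Gamma S\,(v\texttt{>>=}g)$. Inductive: for every $R$, $\bot\,\Gamma R\,v$ for all $v$, and for every $\omega$-chain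 $(u_n)$, $(\forall n.\ u_n\,\Gamma R\,v)\Rightarrow\bigsqcup_n u_n\,\Gamma R\,v$. Respects $\Sigma$: $u_i\,\Gamma R\,v_i$ for all $i$ implies $\sigma^T(\vec u)\,\Gamma R\,\sigma^T(\vec v)$. Terms/values: $M,N::=\mathsf{return}\,V\mid VW\mid(M\ \mathsf{to}\ x.N)\mid\sigma(M_1,\dots,M_{\alpha(\sigma)})$, $V,W::=x\mid\lambda x.M$, modulo $\alpha$-equivalence; $M[V/x]$ substitution; $\mathcal{T}_0,\mathcal{V}_0$ closed terms/values; $\mathcal{T}(\bar x),\mathcal{V}(\bar x)$ those with free variables in $\bar x$. For closed $M$: $M^{(0)}=\bot$, $(\mathsf{return}\,V)^{(n+1)}=\eta(V)$, $((\lambda x.M)V)^{(n+1)}=(M[V/x])^{(n)}$, $(M\ \mathsf{to}\ x.N)^{(n+1)}=M^{(n)}\texttt{>>=}(V\mapsto(N[V/x])^{(n)})$, $(\sigma(\vec M))^{(n+1)}=\sigma^T(M_1^{(n)},\dots)$; this is an $\omega$-chain and $[\![M]\!]=\bigsqcup_nM^{(n)}$. A closed relation $R=(R_{\mathcal{T}}\subseteq\mathcal{T}_0\times\mathcal{T}_0,R_{\mathcal{V}}\subseteq\mathcal{V}_0\times\mathcal{V}_0)$ is an applicative $\Gamma$-simulation if $M\,R_{\mathcal{T}}\,N\Rightarrow[\![M]\!]\,\Gamma R_{\mathcal{V}}\,[\![N]\!]$ and $V\,R_{\mathcal{V}}\,W\Rightarrow VU\,R_{\mathcal{T}}\,WU$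 for every closed value $U$; $\precsim_\Gamma$ is the largest one. The open extension $R^\circ$ of a closed relation: $\bar x\vdash M\,R^\circ\,N$ iff $M,N\in\mathcal{T}(\bar x)$ and $M[\bar V/\bar x]\,R_{\mathcal{T}}\,N[\bar V/\bar x]$ for all closed values $\bar V$ substituted for $\bar x$ (similarly for values). A $\lambda$-term relation is a pair $R=(R_{\mathcal{T}},R_{\mathcal{V}})$ of sets of triples $(\bar x,M,N)$ with $M,N\in\mathcal{T}(\bar x)$, resp. $(\bar x,V,W)$ with $V,W\in\mathcal{V}(\bar x)$, written $\bar x\vdash M\,R\,N$. It is compatible if: $\bar x\vdash x\,R_{\mathcal{V}}\,x$ for $x\in\bar x$; $\bar x\cup\{x\}\vdash M\,R_{\mathcal{T}}\,N$ ($x\notin\bar x$) implies $\bar x\vdash\lambda x.M\,R_{\mathcal{V}}\,\lambda x.N$; $\bar x\vdash V\,R_{\mathcal{V}}\,W$ implies $\bar x\vdash\mathsf{return}\,V\,R_{\mathcal{T}}\,\mathsf{return}\,W$; $\bar x\vdash V\,R_{\mathcal{V}}\,V'$, $\bar x\vdash W\,R_{\mathcal{V}}\,W'$ imply $\bar x\vdash VW\,R_{\mathcal{T}}\,V'W'$; $\bar x\vdash M\,R_{\mathcal{T}}\,M'$, $\bar x\cup\{x\}\vdash N\,R_{\mathcal{T}}\,N'$ ($x\notin\bar x$) imply $\bar x\vdash(M\ \mathsf{to}\ x.N)\,R_{\mathcal{T}}\,(M'\ \mathsf{to}\ x.N')$; $\bar x\vdash M_i\,R_{\mathcal{T}}\,N_i$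 for all $i$ implies $\bar x\vdash\sigma(\vec M)\,R_{\mathcal{T}}\,\sigma(\vec N)$. A precongruence is a compatible preorder (reflexive and transitive for each $\bar x$). Let $\mathcal{U}=\mathcal{V}_0\times\mathcal{V}_0$; $R$ is $\Gamma$-preadequate if for closed $M,N$, $\emptyset\vdash M\,R_{\mathcal{T}}\,N$ implies $[\![M]\!]\,\Gamma\mathcal{U}\,[\![N]\!]$. The $\Gamma$-contextual preorder $\leq_\Gamma$ is the union of all compatible $\Gamma$-preadequate $\lambda$-term relations. *)

Fixpoint fin (n : nat) : Type :=
  match n with
  | O => Empty_set
  | S m => option (fin m)
  end.

Record Signature : Type := {
  sym : Type;
  arity : sym -> nat
}.

(** * Terms and values with free variables among n de Bruijn variables
    (intrinsically scoped; alpha-equivalence is syntactic equality). *)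
Inductive tm (Sg : Signature) : nat -> Type :=
| Ret : forall n, val Sg n -> tm Sg n
| App : forall n, val Sg n -> val Sg n -> tm Sg n
| Seq : forall n, tm Sg n -> tm Sg (S n) -> tm Sg n
| Op  : forall n (s : sym Sg), (fin (arity Sg s) -> tm Sg n) -> tm Sg n
with val (Sg : Signature) : nat -> Type :=
| Var : forall n, fin n -> val Sg n
| Lam : forall n, tm Sg (S n) -> val Sg n.

Arguments Ret {Sg n} V.
Arguments App {Sg n} V W.
Arguments Seq {Sg n} M N.
Arguments Op {Sg n} s args.
Arguments Var {Sg n} i.
Arguments Lam {Sg n} M.

Definition up_ren {m n : nat} (xi : fin m -> fin n) : fin (S m) -> fin (S n) :=
  fun i => match i with None => None | Some j => Some (xi j) end.

Fixpoint ren_tm {Sg : Signature} {m : nat} (M : tm Sg m) {struct M}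
  : forall n, (fin m -> fin n) -> tm Sg n :=
  match M in tm _ m0 return forall n, (fin m0 -> fin n) -> tm Sg n with
  | Ret V => fun n xi => Ret (ren_val V n xi)
  | App V W => fun n xi => App (ren_val V n xi) (ren_val W n xi)
  | Seq M1 N => fun n xi => Seq (ren_tm M1 n xi) (ren_tm N (S n) (up_ren xi))
  | Op s args => fun n xi => Op s (fun i => ren_tm (args i) n xi)
  end
with ren_val {Sg : Signature} {m : nat} (V : val Sg m) {struct V}
  : forall n, (fin m -> fin n) -> val Sg n :=
  match V in val _ m0 return forall n, (fin m0 -> fin n) -> val Sg n with
  | Var i => fun n xi => Var (xi i)
  | Lam B => fun n xi => Lam (ren_tm B (S n) (up_ren xi))
  end.

Definition up_sub {Sg : Signature} {m n : nat} (sigma : fin m -> val Sg n)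
  : fin (S m) -> val Sg (S n) :=
  fun i => match i with
           | None => @Var Sg (S n) None
           | Some j => ren_val (sigma j) (S n) Some
           end.

Fixpoint subst_tm {Sg : Signature} {m : nat} (M : tm Sg m) {struct M}
  : forall n, (fin m -> val Sg n) -> tm Sg n :=
  match M in tm _ m0 return forall n, (fin m0 -> val Sg n) -> tm Sg n with
  | Ret V => fun n s => Ret (subst_val V n s)
  | App V W => fun n s => App (subst_val V n s) (subst_val W n s)
  | Seq M1 N => fun n s => Seq (subst_tm M1 n s) (subst_tm N (S n) (up_sub s))
  | Op o args => fun n s => Op o (fun i => subst_tm (args i) n s)
  end
with subst_val {Sg : Signature} {m : nat} (V : val Sg m) {struct V}
  : forall n, (fin m -> val Sg n) -> val Sg n :=
  match V in val _ m0 return forall n, (fin m0 -> val Sg n) -> val Sg n with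
  | Var i => fun n s => s i
  | Lam B => fun n s => Lam (subst_tm B (S n) (up_sub s))
  end.

(** Single substitution M[V/x] where x is the most recently bound variable *)
Definition inst1 {Sg : Signature} {n : nat} (V : val Sg n) : fin (S n) -> val Sg n :=
  fun i => match i with None => V | Some j => Var j end.

Definition subst1 {Sg : Signature} {n : nat} (M : tm Sg (S n)) (V : val Sg n) : tm Sg n :=
  subst_tm M n (inst1 V).

Definition lam_body {Sg : Signature} {n : nat} (V : val Sg n) : option (tm Sg (S n)) :=
  match V in val _ k return option (tm Sg (S k)) with
  | Var _ => None
  | Lam B => Some B
  end.

Record Monad : Type := {
  mT : Type -> Type;
  eta : forall X, X -> mT X;
  bind : forall X Y, mT X -> (X -> mT Y) -> mT Y;
  bind_eta_l : forall X Y (x : X) (f : X -> mT Y), bind X Y (eta X x) f = f x;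
  bind_eta_r : forall X (u : mT X), bind X X u (eta X) = u;
  bind_assoc : forall X Y Z (u : mT X) (f : X -> mT Y) (g : Y -> mT Z),
      bind Y Z (bind X Y u f) g = bind X Z u (fun x => bind Y Z (f x) g)
}.

Definition tmap (T : Monad) {X Y : Type} (f : X -> Y) (u : mT T X) : mT T Y :=
  bind T X Y u (fun x => eta T Y (f x)).

Definition is_chain {A : Type} (le : A -> A -> Prop) (c : nat -> A) : Prop :=
  forall n, le (c n) (c (S n)).

(** * Continuous Sigma-algebra structure on T: each T X is an omega-CPPO
    (lub given as an operation, characterised on omega-chains), bind is
    continuous in both arguments, and every operation is continuous. *)
Record CSigAlg (Sg : Signature) (T : Monad) : Type := {
  le : forall X, mT T X -> mT T X -> Prop;
  bot : forall X, mT T X;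
  lub : forall X, (nat -> mT T X) -> mT T X;
  opT : forall X (s : sym Sg), (fin (arity Sg s) -> mT T X) -> mT T X;
  le_refl : forall X u, le X u u;
  le_trans : forall X u v w, le X u v -> le X v w -> le X u w;
  le_antisym : forall X u v, le X u v -> le X v u -> u = v;
  bot_least : forall X u, le X (bot X) u;
  lub_ub : forall X c, is_chain (le X) c -> forall n, le X (c n) (lub X c);
  lub_least : forall X c u, is_chain (le X) c ->
      (forall n, le X (c n) u) -> le X (lub X c) u;
  bind_mono_l : forall X Y u u' (f : X -> mT T Y),
      le X u u' -> le Y (bind T X Y u f) (bind T X Y u' f);
  bind_mono_r : forall X Y u (f f' : X -> mT T Y),
      (forall x, le Y (f x) (f' x)) -> le Y (bind T X Y u f) (bind T X Y u f');
  bind_cont_l : forall X Y c (f : X -> mT T Y), is_chain (le X) c ->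
      bind T X Y (lub X c) f = lub Y (fun n => bind T X Y (c n) f);
  bind_cont_r : forall X Y u (f : nat -> X -> mT T Y),
      (forall x, is_chain (le Y) (fun n => f n x)) ->
      bind T X Y u (fun x => lub Y (fun n => f n x)) = lub Y (fun n => bind T X Y u (f n));
  op_mono : forall X s (u u' : fin (arity Sg s) -> mT T X),
      (forall i, le X (u i) (u' i)) -> le X (opT X s u) (opT X s u');
  op_cont : forall X s (c : nat -> fin (arity Sg s) -> mT T X),
      (forall i, is_chain (le X) (fun n => c n i)) ->
      opT X s (fun i => lub X (fun n => c n i)) = lub X (fun n => opT X s (c n))
}.

Arguments le {Sg T} _ X _ _.
Arguments bot {Sg T} _ X.
Arguments lub {Sg T} _ X _.
Arguments opT {Sg T} _ X s _.

(** * Approximations M^(n) and semantics [[M]] = lub_n M^(n).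
    Defined for terms in any context; used only on closed terms. *)
Fixpoint approx {Sg : Signature} {T : Monad} (A : CSigAlg Sg T) (n : nat)
  : forall k, tm Sg k -> mT T (val Sg k) :=
  match n with
  | O => fun k _ => bot A (val Sg k)
  | S n' => fun k M =>
      match M in tm _ k0 return mT T (val Sg k0) with
      | Ret V => eta T _ V
      | App V W =>
          match lam_body V with
          | Some B => approx A n' _ (subst1 B W)
          | None => bot A _
          end
      | Seq M1 N =>
          bind T _ _ (approx A n' _ M1) (fun V => approx A n' _ (subst1 N V))
      | Op s args => opT A _ s (fun i => approx A n' _ (args i))
      end
  end.

Definition sem {Sg : Signature} {T : Monad} (A : CSigAlg Sg T) (M : tm Sg 0)
  : mT T (val Sg 0) :=
  lub A (val Sg 0) (fun n => approx A n 0 M).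

Definition Relator (T : Monad) : Type :=
  forall X Y : Type, (X -> Y -> Prop) -> mT T X -> mT T Y -> Prop.

Definition rcomp {X Y Z : Type} (R : X -> Y -> Prop) (S : Y -> Z -> Prop) : X -> Z -> Prop :=
  fun x z => exists y, R x y /\ S y z.

Record is_relator (T : Monad) (G : Relator T) : Prop := {
  rel_eq : forall X (u : mT T X), G X X (@eq X) u u;
  rel_comp : forall X Y Z (R : X -> Y -> Prop) (S : Y -> Z -> Prop) u v w,
      G X Y R u v -> G Y Z S v w -> G X Z (rcomp R S) u w;
  rel_inv : forall X' Y' X Y (f : X' -> X) (g : Y' -> Y) (R : X -> Y -> Prop) u v,
      G X' Y' (fun z w => R (f z) (g w)) u v <-> G X Y R (tmap T f u) (tmap T g v);
  rel_mono : forall X Y (R R' : X -> Y -> Prop) u v,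
      (forall x y, R x y -> R' x y) -> G X Y R u v -> G X Y R' u v;
  rel_eta : forall X Y (R : X -> Y -> Prop) x y, R x y -> G X Y R (eta T X x) (eta T Y y);
  rel_bind : forall X Y X' Y' (R : X -> Y -> Prop) (S : X' -> Y' -> Prop)
      (f : X -> mT T X') (g : Y -> mT T Y') u v,
      (forall x y, R x y -> G X' Y' S (f x) (g y)) ->
      G X Y R u v -> G X' Y' S (bind T X X' u f) (bind T Y Y' v g)
}.

Definition inductive {Sg : Signature} {T : Monad} (A : CSigAlg Sg T) (G : Relator T) : Prop :=
  (forall X Y (R : X -> Y -> Prop) (v : mT T Y), G X Y R (bot A X) v) /\
  (forall X Y (R : X -> Y -> Prop) (u : nat -> mT T X) (v : mT T Y),
      is_chain (le A X) u -> (forall n, G X Y R (u n) v) -> G X Y R (lub A X u) v).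

Definition respects_sig {Sg : Signature} {T : Monad} (A : CSigAlg Sg T) (G : Relator T) : Prop :=
  forall X Y (R : X -> Y -> Prop) (s : sym Sg)
    (u : fin (arity Sg s) -> mT T X) (v : fin (arity Sg s) -> mT T Y),
    (forall i, G X Y R (u i) (v i)) -> G X Y R (opT A X s u) (opT A Y s v).

Definition is_app_sim {Sg : Signature} {T : Monad} (A : CSigAlg Sg T) (G : Relator T)
  (RT : tm Sg 0 -> tm Sg 0 -> Prop) (RV : val Sg 0 -> val Sg 0 -> Prop) : Prop :=
  (forall M N, RT M N -> G (val Sg 0) (val Sg 0) RV (sem A M) (sem A N)) /\
  (forall V W, RV V W -> forall U, RT (App V U) (App W U)).

Definition simT {Sg : Signature} {T : Monad} (A : CSigAlg Sg T) (G : Relator T)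
  (M N : tm Sg 0) : Prop :=
  exists RT RV, is_app_sim A G RT RV /\ RT M N.

Definition simV {Sg : Signature} {T : Monad} (A : CSigAlg Sg T) (G : Relator T)
  (V W : val Sg 0) : Prop :=
  exists RT RV, is_app_sim A G RT RV /\ RV V W.

Definition openT {Sg : Signature} (R : tm Sg 0 -> tm Sg 0 -> Prop)
  (n : nat) (M N : tm Sg n) : Prop :=
  forall sigma : fin n -> val Sg 0, R (subst_tm M 0 sigma) (subst_tm N 0 sigma).

Definition openV {Sg : Signature} (R : val Sg 0 -> val Sg 0 -> Prop)
  (n : nat) (V W : val Sg n) : Prop :=
  forall sigma : fin n -> val Sg 0, R (subst_val V 0 sigma) (subst_val W 0 sigma).

Definition tmRel (Sg : Signature) : Type := forall n, tm Sg n -> tm Sg n -> Prop.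
Definition valRel (Sg : Signature) : Type := forall n, val Sg n -> val Sg n -> Prop.

Definition compatible {Sg : Signature} (RT : tmRel Sg) (RV : valRel Sg) : Prop :=
  (forall n (i : fin n), RV n (Var i) (Var i)) /\
  (forall n (M N : tm Sg (S n)), RT (S n) M N -> RV n (Lam M) (Lam N)) /\
  (forall n (V W : val Sg n), RV n V W -> RT n (Ret V) (Ret W)) /\
  (forall n (V V' W W' : val Sg n), RV n V V' -> RV n W W' -> RT n (App V W) (App V' W')) /\
  (forall n (M M' : tm Sg n) (N N' : tm Sg (S n)),
      RT n M M' -> RT (S n) N N' -> RT n (Seq M N) (Seq M' N')) /\
  (forall n (s : sym Sg) (Ms Ns : fin (arity Sg s) -> tm Sg n),
      (forall i, RT n (Ms i) (Ns i)) -> RT n (Op s Ms) (Op s Ns)).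

Definition precongruence {Sg : Signature} (RT : tmRel Sg) (RV : valRel Sg) : Prop :=
  compatible RT RV /\
  (forall n M, RT n M M) /\ (forall n V, RV n V V) /\
  (forall n M N P, RT n M N -> RT n N P -> RT n M P) /\
  (forall n V W U, RV n V W -> RV n W U -> RV n V U).

Definition preadequate {Sg : Signature} {T : Monad} (A : CSigAlg Sg T) (G : Relator T)
  (RT : tmRel Sg) : Prop :=
  forall M N : tm Sg 0, RT 0 M N ->
    G (val Sg 0) (val Sg 0) (fun _ _ => True) (sem A M) (sem A N).

Definition ctxT {Sg : Signature} {T : Monad} (A : CSigAlg Sg T) (G : Relator T)
  (n : nat) (M N : tm Sg n) : Prop :=
  exists (RT : tmRel Sg) (RV : valRel Sg), compatible RT RV /\ preadequate A G RT /\ RT n M N.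

Definition ctxV {Sg : Signature} {T : Monad} (A : CSigAlg Sg T) (G : Relator T)
  (n : nat) (V W : val Sg n) : Prop :=
  exists (RT : tmRel Sg) (RV : valRel Sg), compatible RT RV /\ preadequate A G RT /\ RV n V W.

From Stdlib Require Import FunctionalExtensionality Lia.

(* Howe's method.  In the Howe extension S^H of open similarity, M S^H N when
   M and N have the same outermost constructor, S^H-related immediate
   subterms, up to one final step of open similarity.  S^H is compatible by
   construction, contains open similarity, and is substitutive.  The crux is
   that its closed part is an applicative Gamma-simulation: Gamma(S^H) relates
   M^(k) to [[N]] by induction on k, where inductivity of Gamma handles k = 0
   and the passage to the lub, preservation of eta, bind and Sigma handles the
   constructors, and the final similarity step is absorbed by composing
   relators.  Hence S^H is contained in similarity, so it coincides with open
   similarity, which is therefore compatible; monotonicity of Gamma makes it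
   Gamma-preadequate, so it lies in the contextual preorder. *)

Scheme tm_ind2 := Induction for tm Sort Prop with val_ind2 := Induction for val Sort Prop.
Combined Scheme tmval_ind from tm_ind2, val_ind2.

Section Substitution.

Variable Sg : Signature.

Lemma ren_ren :
  (forall m (M : tm Sg m) n (xi : fin m -> fin n) k (zeta : fin n -> fin k) f,
      (forall i, f i = zeta (xi i)) -> ren_tm (ren_tm M n xi) k zeta = ren_tm M k f) /\
  (forall m (V : val Sg m) n (xi : fin m -> fin n) k (zeta : fin n -> fin k) f,
      (forall i, f i = zeta (xi i)) -> ren_val (ren_val V n xi) k zeta = ren_val V k f).
Proof.
  apply tmval_ind.
  - intros m V IH n xi k zeta f Hf; simpl; f_equal; auto.
  - intros m V IHV W IHW n xi k zeta f Hf; simpl; f_equal; auto.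
  - intros m M IHM N IHN n xi k zeta f Hf; simpl; f_equal; auto.
    apply IHN; intros [i|]; simpl; congruence.
  - intros m s Ms IH n xi k zeta f Hf; simpl; f_equal.
    apply functional_extensionality; auto.
  - intros m i n xi k zeta f Hf; simpl; f_equal; auto.
  - intros m M IH n xi k zeta f Hf; simpl; f_equal.
    apply IH; intros [i|]; simpl; congruence.
Qed.

Lemma ren_val_comp m n k (V : val Sg m) (xi : fin m -> fin n) (zeta : fin n -> fin k) :
  ren_val (ren_val V n xi) k zeta = ren_val V k (fun i => zeta (xi i)).
Proof. apply ren_ren; reflexivity. Qed.

Lemma ren_subst :
  (forall m (M : tm Sg m) n sigma k (xi : fin n -> fin k) f,
      (forall i, f i = ren_val (sigma i) k xi) ->
      ren_tm (subst_tm M n sigma) k xi = subst_tm M k f) /\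
  (forall m (V : val Sg m) n sigma k (xi : fin n -> fin k) f,
      (forall i, f i = ren_val (sigma i) k xi) ->
      ren_val (subst_val V n sigma) k xi = subst_val V k f).
Proof.
  apply tmval_ind.
  - intros m V IH n sigma k xi f Hf; simpl; f_equal; auto.
  - intros m V IHV W IHW n sigma k xi f Hf; simpl; f_equal; auto.
  - intros m M IHM N IHN n sigma k xi f Hf; simpl; f_equal; auto.
    apply IHN; intros [i|]; simpl; [|reflexivity].
    rewrite Hf, !ren_val_comp; reflexivity.
  - intros m s Ms IH n sigma k xi f Hf; simpl; f_equal.
    apply functional_extensionality; auto.
  - intros m i n sigma k xi f Hf; simpl; auto.
  - intros m M IH n sigma k xi f Hf; simpl; f_equal.
    apply IH; intros [i|]; simpl; [|reflexivity].
    rewrite Hf, !ren_val_comp; reflexivity.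
Qed.

Lemma subst_ren :
  (forall m (M : tm Sg m) n xi k (sigma : fin n -> val Sg k) f,
      (forall i, f i = sigma (xi i)) -> subst_tm (ren_tm M n xi) k sigma = subst_tm M k f) /\
  (forall m (V : val Sg m) n xi k (sigma : fin n -> val Sg k) f,
      (forall i, f i = sigma (xi i)) -> subst_val (ren_val V n xi) k sigma = subst_val V k f).
Proof.
  apply tmval_ind.
  - intros m V IH n xi k sigma f Hf; simpl; f_equal; auto.
  - intros m V IHV W IHW n xi k sigma f Hf; simpl; f_equal; auto.
  - intros m M IHM N IHN n xi k sigma f Hf; simpl; f_equal; auto.
    apply IHN; intros [i|]; simpl; congruence.
  - intros m s Ms IH n xi k sigma f Hf; simpl; f_equal.
    apply functional_extensionality; auto.
  - intros m i n xi k sigma f Hf; simpl; auto.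
  - intros m M IH n xi k sigma f Hf; simpl; f_equal.
    apply IH; intros [i|]; simpl; congruence.
Qed.

Lemma subst_subst :
  (forall m (M : tm Sg m) n sigma k (tau : fin n -> val Sg k) f,
      (forall i, f i = subst_val (sigma i) k tau) ->
      subst_tm (subst_tm M n sigma) k tau = subst_tm M k f) /\
  (forall m (V : val Sg m) n sigma k (tau : fin n -> val Sg k) f,
      (forall i, f i = subst_val (sigma i) k tau) ->
      subst_val (subst_val V n sigma) k tau = subst_val V k f).
Proof.
  assert (up_sub_comp : forall m n k (sigma : fin m -> val Sg n) (tau : fin n -> val Sg k) i,
             ren_val (subst_val (sigma i) k tau) (S k) Some
             = subst_val (ren_val (sigma i) (S n) Some) (S k) (up_sub tau)).
  { intros m n k sigma tau i.
    rewrite (proj2 subst_ren _ _ _ _ _ _ (fun j => ren_val (tau j) (S k) Some)),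
      (proj2 ren_subst _ _ _ _ _ _ (fun j => ren_val (tau j) (S k) Some)); reflexivity. }
  apply tmval_ind.
  - intros m V IH n sigma k tau f Hf; simpl; f_equal; auto.
  - intros m V IHV W IHW n sigma k tau f Hf; simpl; f_equal; auto.
  - intros m M IHM N IHN n sigma k tau f Hf; simpl; f_equal; auto.
    apply IHN; intros [i|]; simpl; [rewrite Hf; apply up_sub_comp | reflexivity].
  - intros m s Ms IH n sigma k tau f Hf; simpl; f_equal.
    apply functional_extensionality; auto.
  - intros m i n sigma k tau f Hf; simpl; auto.
  - intros m M IH n sigma k tau f Hf; simpl; f_equal.
    apply IH; intros [i|]; simpl; [rewrite Hf; apply up_sub_comp | reflexivity].
Qed.

Lemma subst_id :
  (forall m (M : tm Sg m) sigma, (forall i, sigma i = Var i) -> subst_tm M m sigma = M) /\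
  (forall m (V : val Sg m) sigma, (forall i, sigma i = Var i) -> subst_val V m sigma = V).
Proof.
  apply tmval_ind.
  - intros m V IH sigma Hs; simpl; f_equal; auto.
  - intros m V IHV W IHW sigma Hs; simpl; f_equal; auto.
  - intros m M IHM N IHN sigma Hs; simpl; f_equal; auto.
    apply IHN; intros [i|]; simpl; [rewrite Hs|]; reflexivity.
  - intros m s Ms IH sigma Hs; simpl; f_equal.
    apply functional_extensionality; auto.
  - intros m i sigma Hs; simpl; auto.
  - intros m M IH sigma Hs; simpl; f_equal.
    apply IH; intros [i|]; simpl; [rewrite Hs|]; reflexivity.
Qed.

Lemma subst_tm_closed (M : tm Sg 0) sigma : subst_tm M 0 sigma = M.
Proof. apply subst_id; intros []. Qed.

Lemma subst_val_closed (V : val Sg 0) sigma : subst_val V 0 sigma = V.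
Proof. apply subst_id; intros []. Qed.

Lemma closed_tm_ind (P : tm Sg 0 -> Prop) :
  (forall V, P (Ret V)) -> (forall V W, P (App V W)) -> (forall M N, P (Seq M N)) ->
  (forall s Ms, P (Op s Ms)) -> forall M, P M.
Proof.
  intros Hret Happ Hseq Hop M.
  assert (H : forall n (M' : tm Sg n) (e : n = 0), P (eq_rect n (tm Sg) M' 0 e))
    by (intros n M' e; destruct M'; subst; simpl; auto).
  exact (H 0 M eq_refl).
Qed.

Lemma closed_val_lam (V : val Sg 0) : exists B, V = Lam B.
Proof.
  assert (H : forall n (V' : val Sg n) (e : n = 0), exists B, eq_rect n (val Sg) V' 0 e = Lam B).
  { intros n V' e; destruct V' as [n' i|n' B]; subst; simpl; [destruct i | eauto]. }
  exact (H 0 V eq_refl).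
Qed.

End Substitution.

Section OmegaChains.

Variables (Sg : Signature) (T : Monad) (A : CSigAlg Sg T) (X : Type).

Lemma chain_le (c : nat -> mT T X) :
  is_chain (le A X) c -> forall m m', m <= m' -> le A X (c m) (c m').
Proof.
  intros Hc m m' Hm. induction Hm.
  - apply le_refl.
  - eapply le_trans; eauto.
Qed.

Lemma lub_shift (c : nat -> mT T X) :
  is_chain (le A X) c -> lub A X c = lub A X (fun n => c (S n)).
Proof.
  intro Hc. assert (Hc' : is_chain (le A X) (fun n => c (S n))) by (intro; apply Hc).
  apply (le_antisym _ _ A); apply lub_least; auto; intro n.
  - eapply le_trans; [apply Hc | apply (lub_ub _ _ _ _ _ Hc' n)].
  - apply (lub_ub _ _ _ _ _ Hc (S n)).
Qed.

Lemma lub_diag (f : nat -> nat -> mT T X) :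
  (forall m n, le A X (f m n) (f (S m) n)) -> (forall m n, le A X (f m n) (f m (S n))) ->
  lub A X (fun m => lub A X (fun n => f m n)) = lub A X (fun n => f n n).
Proof.
  intros Hm Hn.
  assert (Hrow : forall m, is_chain (le A X) (fun n => f m n)) by (intros m n; apply Hn).
  assert (Hcol : forall n, is_chain (le A X) (fun m => f m n)) by (intros n m; apply Hm).
  assert (Hdiag : is_chain (le A X) (fun n => f n n))
    by (intro n; eapply le_trans; [apply Hm | apply Hn]).
  assert (Hlubs : is_chain (le A X) (fun m => lub A X (fun n => f m n))).
  { intro m. apply lub_least; auto. intro n.
    eapply le_trans; [apply Hm | apply (lub_ub _ _ _ _ _ (Hrow (S m)) n)]. }
  apply (le_antisym _ _ A); apply lub_least; auto.
  - intro m. apply lub_least; auto. intro n.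
    apply le_trans with (f (Nat.max m n) (Nat.max m n)).
    + eapply le_trans.
      * apply (chain_le _ (Hcol n) m (Nat.max m n)); lia.
      * apply (chain_le _ (Hrow (Nat.max m n)) n (Nat.max m n)); lia.
    + apply (lub_ub _ _ _ _ _ Hdiag).
  - intro n. eapply le_trans.
    + apply (lub_ub _ _ _ _ _ (Hrow n) n).
    + apply (lub_ub _ _ _ _ _ Hlubs n).
Qed.

End OmegaChains.

Section Semantics.

Variables (Sg : Signature) (T : Monad) (A : CSigAlg Sg T).

Lemma approx_is_chain n (M : tm Sg n) : is_chain (le A _) (fun k => approx A k n M).
Proof.
  intro k. revert n M. induction k as [|k IH]; intros n M; simpl.
  - apply bot_least.
  - destruct M as [n V|n V W|n M N|n s Ms]; simpl.
    + apply le_refl.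
    + destruct (lam_body V); [apply IH | apply le_refl].
    + eapply le_trans; [apply bind_mono_l, IH | apply bind_mono_r; intro; apply IH].
    + apply op_mono; intro; apply IH.
Qed.

Lemma sem_unfold (M : tm Sg 0) : sem A M = lub A _ (fun k => approx A (S k) 0 M).
Proof. apply lub_shift, approx_is_chain. Qed.

Lemma sem_ret (V : val Sg 0) : sem A (Ret V) = eta T _ V.
Proof.
  rewrite sem_unfold. simpl. apply (le_antisym _ _ A).
  - apply lub_least; [intro; apply le_refl | intro; apply le_refl].
  - apply (lub_ub _ _ _ _ (fun _ => eta T _ V) (fun _ => le_refl _ _ A _ _) 0).
Qed.

Lemma sem_app_lam (B : tm Sg 1) (W : val Sg 0) :
  sem A (App (Lam B) W) = sem A (subst1 B W).
Proof. rewrite sem_unfold. reflexivity. Qed.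

Lemma sem_op s (Ms : fin (arity Sg s) -> tm Sg 0) :
  sem A (Op s Ms) = opT A _ s (fun i => sem A (Ms i)).
Proof.
  rewrite sem_unfold. simpl. symmetry.
  apply (op_cont _ _ A _ s (fun k i => approx A k 0 (Ms i))).
  intro i. apply approx_is_chain.
Qed.

(* Continuity of bind in each argument separately turns the lub of
   M^(k) >>= N^(k) into a double lub, which collapses to its diagonal. *)
Lemma sem_seq (M : tm Sg 0) (N : tm Sg 1) :
  sem A (Seq M N) = bind T _ _ (sem A M) (fun V => sem A (subst1 N V)).
Proof.
  rewrite sem_unfold. simpl. unfold sem.
  rewrite (bind_cont_r _ _ A _ _ _ (fun k V => approx A k 0 (subst1 N V)))
    by (intro; apply approx_is_chain).
  rewrite <- (lub_diag _ _ A _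
    (fun k l => bind T _ _ (approx A l 0 M) (fun V => approx A k 0 (subst1 N V)))).
  - f_equal. apply functional_extensionality. intro k.
    symmetry; apply bind_cont_l, approx_is_chain.
  - intros k l. apply bind_mono_r. intro; apply approx_is_chain.
  - intros k l. apply bind_mono_l, approx_is_chain.
Qed.

End Semantics.

Section OpenExtension.

Variables (Sg : Signature) (RT : tm Sg 0 -> tm Sg 0 -> Prop) (RV : val Sg 0 -> val Sg 0 -> Prop).

Lemma openT_subst m n (M N : tm Sg m) (sigma : fin m -> val Sg n) :
  openT RT m M N -> openT RT n (subst_tm M n sigma) (subst_tm N n sigma).
Proof.
  intros H rho. unfold openT in *.
  rewrite !(proj1 (subst_subst Sg) _ _ _ _ _ _ (fun i => subst_val (sigma i) 0 rho)) by auto.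
  apply H.
Qed.

Lemma openV_subst m n (V W : val Sg m) (sigma : fin m -> val Sg n) :
  openV RV m V W -> openV RV n (subst_val V n sigma) (subst_val W n sigma).
Proof.
  intros H rho. unfold openV in *.
  rewrite !(proj2 (subst_subst Sg) _ _ _ _ _ _ (fun i => subst_val (sigma i) 0 rho)) by auto.
  apply H.
Qed.

Lemma openT_ren m n (M N : tm Sg m) (xi : fin m -> fin n) :
  openT RT m M N -> openT RT n (ren_tm M n xi) (ren_tm N n xi).
Proof.
  intros H rho. unfold openT in *.
  rewrite !(proj1 (subst_ren Sg) _ _ _ _ _ _ (fun i => rho (xi i))) by auto.
  apply H.
Qed.

Lemma openV_ren m n (V W : val Sg m) (xi : fin m -> fin n) :
  openV RV m V W -> openV RV n (ren_val V n xi) (ren_val W n xi).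
Proof.
  intros H rho. unfold openV in *.
  rewrite !(proj2 (subst_ren Sg) _ _ _ _ _ _ (fun i => rho (xi i))) by auto.
  apply H.
Qed.

Lemma openT_closed (M N : tm Sg 0) : openT RT 0 M N <-> RT M N.
Proof.
  unfold openT; split.
  - intro H. specialize (H (fun i => match i with end)).
    rewrite !subst_tm_closed in H. exact H.
  - intros H sigma. rewrite !subst_tm_closed. exact H.
Qed.

Lemma openV_closed (V W : val Sg 0) : openV RV 0 V W <-> RV V W.
Proof.
  unfold openV; split.
  - intro H. specialize (H (fun i => match i with end)).
    rewrite !subst_val_closed in H. exact H.
  - intros H sigma. rewrite !subst_val_closed. exact H.
Qed.

End OpenExtension.

Section Similarity.

Variables (Sg : Signature) (T : Monad) (A : CSigAlg Sg T) (G : Relator T).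
Hypothesis HG : is_relator T G.

Lemma sim_is_app_sim : is_app_sim A G (simT A G) (simV A G).
Proof.
  split.
  - intros M N (RT & RV & [Hsem Happ] & HMN).
    eapply rel_mono; [exact HG | | exact (Hsem _ _ HMN)].
    intros V W HVW. exists RT, RV; split; [split|]; auto.
  - intros V W (RT & RV & [Hsem Happ] & HVW) U.
    exists RT, RV; split; [split|]; auto.
Qed.

Lemma eq_is_app_sim : is_app_sim A G eq eq.
Proof.
  split.
  - intros M N <-. apply rel_eq, HG.
  - intros V W <- U. reflexivity.
Qed.

Lemma simT_refl (M : tm Sg 0) : simT A G M M.
Proof. exists eq, eq. split; [apply eq_is_app_sim | reflexivity]. Qed.

Lemma simV_refl (V : val Sg 0) : simV A G V V.
Proof. exists eq, eq. split; [apply eq_is_app_sim | reflexivity]. Qed.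

Lemma sim_comp_is_app_sim :
  is_app_sim A G (rcomp (simT A G) (simT A G)) (rcomp (simV A G) (simV A G)).
Proof.
  destruct sim_is_app_sim as [Hsem Happ]. split.
  - intros M N (P & HMP & HPN). eapply rel_comp; eauto.
  - intros V W (P & HVP & HPW) U. exists (App P U); split; auto.
Qed.

Lemma simT_trans (M N P : tm Sg 0) : simT A G M N -> simT A G N P -> simT A G M P.
Proof.
  intros HMN HNP. exists (rcomp (simT A G) (simT A G)), (rcomp (simV A G) (simV A G)).
  split; [apply sim_comp_is_app_sim | exists N; auto].
Qed.

Lemma simV_trans (U V W : val Sg 0) : simV A G U V -> simV A G V W -> simV A G U W.
Proof.
  intros HUV HVW. exists (rcomp (simT A G) (simT A G)), (rcomp (simV A G) (simV A G)).
  split; [apply sim_comp_is_app_sim | exists V; auto].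
Qed.

End Similarity.

Section HoweExtension.

Variables (Sg : Signature) (ST : tm Sg 0 -> tm Sg 0 -> Prop) (SV : val Sg 0 -> val Sg 0 -> Prop).

Fixpoint howeT {m : nat} (M : tm Sg m) {struct M} : tm Sg m -> Prop :=
  match M in tm _ m0 return tm Sg m0 -> Prop with
  | Ret V => fun N => exists V', howeV V V' /\ openT ST _ (Ret V') N
  | App V W => fun N => exists V' W', howeV V V' /\ howeV W W' /\ openT ST _ (App V' W') N
  | Seq M1 M2 => fun N => exists M1' M2', howeT M1 M1' /\ howeT M2 M2' /\
                                         openT ST _ (Seq M1' M2') N
  | Op s Ms => fun N => exists Ns, (forall i, howeT (Ms i) (Ns i)) /\ openT ST _ (Op s Ns) N
  end
with howeV {m : nat} (V : val Sg m) {struct V} : val Sg m -> Prop :=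
  match V in val _ m0 return val Sg m0 -> Prop with
  | Var i => fun W => openV SV _ (Var i) W
  | Lam B => fun W => exists B', howeT B B' /\ openV SV _ (Lam B') W
  end.

Lemma howe_ren :
  (forall m (M N : tm Sg m) n (xi : fin m -> fin n),
      howeT M N -> howeT (ren_tm M n xi) (ren_tm N n xi)) /\
  (forall m (V W : val Sg m) n (xi : fin m -> fin n),
      howeV V W -> howeV (ren_val V n xi) (ren_val W n xi)).
Proof.
  apply tmval_ind; simpl.
  - intros m V IH N n xi (V' & HV & HN).
    exists (ren_val V' n xi). split; [auto | apply (openT_ren _ _ _ _ (Ret V')), HN].
  - intros m V IHV W IHW N n xi (V' & W' & HV & HW & HN).
    exists (ren_val V' n xi), (ren_val W' n xi).
    repeat split; [auto | auto | apply (openT_ren _ _ _ _ (App V' W')), HN].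
  - intros m M1 IH1 M2 IH2 N n xi (M1' & M2' & H1 & H2 & HN).
    exists (ren_tm M1' n xi), (ren_tm M2' (S n) (up_ren xi)).
    repeat split; [auto | auto | apply (openT_ren _ _ _ _ (Seq M1' M2')), HN].
  - intros m s Ms IH N n xi (Ns & HMs & HN).
    exists (fun i => ren_tm (Ns i) n xi). split; [auto | apply (openT_ren _ _ _ _ (Op s Ns)), HN].
  - intros m i W n xi HW. apply (openV_ren _ _ _ _ (Var i)), HW.
  - intros m B IH W n xi (B' & HB & HW).
    exists (ren_tm B' (S n) (up_ren xi)). split; [auto | apply (openV_ren _ _ _ _ (Lam B')), HW].
Qed.

Hypotheses (ST_trans : forall M N P, ST M N -> ST N P -> ST M P)
           (SV_trans : forall U V W, SV U V -> SV V W -> SV U W).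

Lemma howe_open_trans :
  (forall m (M N P : tm Sg m), howeT M N -> openT ST m N P -> howeT M P) /\
  (forall m (U V W : val Sg m), howeV U V -> openV SV m V W -> howeV U W).
Proof.
  assert (OT : forall m (M N P : tm Sg m), openT ST m M N -> openT ST m N P -> openT ST m M P)
    by (intros m M N P H1 H2 sigma; eauto).
  assert (OV : forall m (U V W : val Sg m), openV SV m U V -> openV SV m V W -> openV SV m U W)
    by (intros m U V W H1 H2 sigma; eauto).
  split.
  - intros m M N P H HNP. destruct M; simpl in *.
    + destruct H as (V' & HV & HN). exists V'; eauto.
    + destruct H as (V' & W' & HV & HW & HN). exists V', W'; eauto.
    + destruct H as (M1' & M2' & H1 & H2 & HN). exists M1', M2'; eauto.
    + destruct H as (Ns & HMs & HN). exists Ns; eauto.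
  - intros m U V W H HVW. destruct U; simpl in *; eauto.
    destruct H as (B' & HB & HV). exists B'; eauto.
Qed.

Hypotheses (ST_refl : forall M, ST M M) (SV_refl : forall V, SV V V).

Lemma howe_refl : (forall m (M : tm Sg m), howeT M M) /\ (forall m (V : val Sg m), howeV V V).
Proof.
  apply tmval_ind; simpl; intros.
  - exists v. split; [auto | intro; apply ST_refl].
  - exists v, v0. repeat split; [auto | auto | intro; apply ST_refl].
  - exists t, t0. repeat split; [auto | auto | intro; apply ST_refl].
  - exists t. split; [auto | intro; apply ST_refl].
  - intro; apply SV_refl.
  - exists t. split; [auto | intro; apply SV_refl].
Qed.

Lemma howe_compatible : compatible (@howeT) (@howeV).
Proof.
  destruct howe_refl as [HreflT HreflV].
  assert (OT : forall m (M : tm Sg m), openT ST m M M) by (intros m M sigma; apply ST_refl).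
  assert (OV : forall m (V : val Sg m), openV SV m V V) by (intros m V sigma; apply SV_refl).
  repeat split; simpl.
  - intros n i. apply OV.
  - intros n M N H. exists N; auto.
  - intros n V W H. exists W; auto.
  - intros n V V' W W' HV HW. exists V', W'; auto.
  - intros n M M' N N' HM HN. exists M', N'; auto.
  - intros n s Ms Ns H. exists Ns; auto.
Qed.

Lemma open_sub_howe :
  (forall m (M N : tm Sg m), openT ST m M N -> howeT M N) /\
  (forall m (V W : val Sg m), openV SV m V W -> howeV V W).
Proof.
  split; intros; eapply howe_open_trans; eauto; apply howe_refl.
Qed.

Lemma howe_subst :
  (forall m (M N : tm Sg m) n (sigma tau : fin m -> val Sg n),
      (forall i, howeV (sigma i) (tau i)) ->
      howeT M N -> howeT (subst_tm M n sigma) (subst_tm N n tau)) /\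
  (forall m (V W : val Sg m) n (sigma tau : fin m -> val Sg n),
      (forall i, howeV (sigma i) (tau i)) ->
      howeV V W -> howeV (subst_val V n sigma) (subst_val W n tau)).
Proof.
  assert (Hup : forall m n (sigma tau : fin m -> val Sg n),
             (forall i, howeV (sigma i) (tau i)) ->
             forall i, howeV (up_sub sigma i) (up_sub tau i)).
  { intros m n sigma tau Hst [i|]; simpl.
    - apply howe_ren, Hst.
    - exact (proj2 howe_refl (S n) (Var (None : fin (S n)))). }
  apply tmval_ind; simpl.
  - intros m V IH N n sigma tau Hst (V' & HV & HN).
    exists (subst_val V' n tau).
    split; [auto | apply (openT_subst _ _ _ _ (Ret V')), HN].
  - intros m V IHV W IHW N n sigma tau Hst (V' & W' & HV & HW & HN).
    exists (subst_val V' n tau), (subst_val W' n tau).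
    repeat split; [auto | auto | apply (openT_subst _ _ _ _ (App V' W')), HN].
  - intros m M1 IH1 M2 IH2 N n sigma tau Hst (M1' & M2' & H1 & H2 & HN).
    exists (subst_tm M1' n tau), (subst_tm M2' (S n) (up_sub tau)).
    repeat split; [auto | auto | apply (openT_subst _ _ _ _ (Seq M1' M2')), HN].
  - intros m s Ms IH N n sigma tau Hst (Ns & HMs & HN).
    exists (fun i => subst_tm (Ns i) n tau).
    split; [auto | apply (openT_subst _ _ _ _ (Op s Ns)), HN].
  - intros m i W n sigma tau Hst HW.
    apply (proj2 howe_open_trans) with (tau i); [apply Hst | apply (openV_subst _ _ _ _ (Var i)), HW].
  - intros m B IH W n sigma tau Hst (B' & HB & HW).
    exists (subst_tm B' (S n) (up_sub tau)).
    split; [auto | apply (openV_subst _ _ _ _ (Lam B')), HW].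
Qed.

Lemma howe_subst1 (B B' : tm Sg 1) (W W' : val Sg 0) :
  howeT B B' -> howeV W W' -> howeT (subst1 B W) (subst1 B' W').
Proof.
  intros HB HW. apply howe_subst; [intros [[]|]; simpl; exact HW | exact HB].
Qed.

End HoweExtension.

Arguments howeT {Sg} ST SV {m} M N.
Arguments howeV {Sg} ST SV {m} V W.

Section HoweSimulation.

Variables (Sg : Signature) (T : Monad) (A : CSigAlg Sg T) (G : Relator T).
Hypotheses (HG : is_relator T G) (Hind : inductive A G) (Hsig : respects_sig A G).
Variables (ST : tm Sg 0 -> tm Sg 0 -> Prop) (SV : val Sg 0 -> val Sg 0 -> Prop).
Hypotheses (Hsim : is_app_sim A G ST SV)
           (ST_refl : forall M, ST M M) (SV_refl : forall V, SV V V)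
           (ST_trans : forall M N P, ST M N -> ST N P -> ST M P)
           (SV_trans : forall U V W, SV U V -> SV V W -> SV U W).

Let HV (V W : val Sg 0) : Prop := howeV ST SV V W.

Lemma rel_howe_sim_r u (P N : tm Sg 0) :
  G _ _ HV u (sem A P) -> ST P N -> G _ _ HV u (sem A N).
Proof.
  intros Hu HPN.
  eapply rel_mono; [exact HG | | eapply rel_comp; [exact HG | exact Hu | exact (proj1 Hsim _ _ HPN)]].
  intros V W (U & HVU & HUW).
  apply (proj2 (howe_open_trans Sg ST SV ST_trans SV_trans)) with U; [exact HVU|].
  apply openV_closed, HUW.
Qed.

Lemma howe_approx k (M N : tm Sg 0) :
  howeT ST SV M N -> G _ _ HV (approx A k 0 M) (sem A N).
Proof.
  revert M N. induction k as [|k IH].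
  - intros M N _. apply (proj1 Hind).
  - intro M. pattern M; apply closed_tm_ind; clear M; simpl.
    + intros V N (V' & HVV' & HN). apply rel_howe_sim_r with (Ret V').
      * rewrite sem_ret. apply rel_eta; auto.
      * apply openT_closed, HN.
    + intros V W N (V' & W' & HVV' & HWW' & HN).
      destruct (closed_val_lam Sg V) as [B ->].
      destruct HVV' as (B' & HBB' & HV'). simpl.
      apply rel_howe_sim_r with (App (Lam B') W').
      * rewrite sem_app_lam. apply IH, howe_subst1; auto.
      * apply ST_trans with (App V' W').
        -- apply (proj2 Hsim), openV_closed, HV'.
        -- apply openT_closed, HN.
    + intros M1 M2 N (M1' & M2' & H1 & H2 & HN).
      apply rel_howe_sim_r with (Seq M1' M2').
      * rewrite sem_seq. eapply rel_bind; eauto.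
        intros V V' HVV'. apply IH, howe_subst1; auto.
      * apply openT_closed, HN.
    + intros s Ms N (Ns & HMs & HN).
      apply rel_howe_sim_r with (Op s Ns).
      * rewrite sem_op. apply Hsig. intro i. apply IH, HMs.
      * apply openT_closed, HN.
Qed.

Lemma howe_is_app_sim :
  is_app_sim A G (fun M N => howeT ST SV M N) (fun V W => howeV ST SV V W).
Proof.
  split.
  - intros M N HMN. apply (proj2 Hind); [apply approx_is_chain|].
    intro k. apply howe_approx, HMN.
  - intros V W HVW U. simpl. exists W, U.
    repeat split; [exact HVW | apply (howe_refl Sg ST SV ST_refl SV_refl) | intro; apply ST_refl].
Qed.

End HoweSimulation.

Lemma compatible_iff (Sg : Signature) (RT RT' : tmRel Sg) (RV RV' : valRel Sg) :
  (forall n M N, RT n M N <-> RT' n M N) -> (forall n V W, RV n V W <-> RV' n V W) ->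
  compatible RT RV -> compatible RT' RV'.
Proof.
  intros ET EV (Hvar & Hlam & Hret & Happ & Hseq & Hop).
  repeat split; intros.
  - apply EV, Hvar.
  - apply EV, Hlam, ET; assumption.
  - apply ET, Hret, EV; assumption.
  - apply ET, Happ; apply EV; assumption.
  - apply ET, Hseq; apply ET; assumption.
  - apply ET, Hop; intro; apply ET; auto.
Qed.

Section OpenSimilarity.

Variables (Sg : Signature) (T : Monad) (A : CSigAlg Sg T) (G : Relator T).
Hypotheses (HG : is_relator T G) (Hind : inductive A G) (Hsig : respects_sig A G).

Let ST_refl := simT_refl Sg T A G HG.
Let SV_refl := simV_refl Sg T A G HG.
Let ST_trans := simT_trans Sg T A G HG.
Let SV_trans := simV_trans Sg T A G HG.

Lemma howe_sim_open_sim :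
  (forall m (M N : tm Sg m), howeT (simT A G) (simV A G) M N -> openT (simT A G) m M N) /\
  (forall m (V W : val Sg m), howeV (simT A G) (simV A G) V W -> openV (simV A G) m V W).
Proof.
  pose proof (howe_is_app_sim Sg T A G HG Hind Hsig _ _ (sim_is_app_sim Sg T A G HG)
    ST_refl SV_refl ST_trans SV_trans) as Hsim.
  pose proof (howe_subst Sg _ _ ST_trans SV_trans ST_refl SV_refl) as [HsubT HsubV].
  pose proof (howe_refl Sg _ _ ST_refl SV_refl) as [_ HreflV].
  split.
  - intros m M N HMN sigma. do 2 eexists. split; [exact Hsim|]. apply HsubT; auto.
  - intros m V W HVW sigma. do 2 eexists. split; [exact Hsim|]. apply HsubV; auto.
Qed.

Lemma open_sim_compatible : compatible (openT (simT A G)) (openV (simV A G)).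
Proof.
  pose proof (open_sub_howe Sg _ _ ST_trans SV_trans ST_refl SV_refl) as [HoT HoV].
  destruct howe_sim_open_sim as [HhT HhV].
  apply (compatible_iff Sg (@howeT Sg (simT A G) (simV A G)) _ (@howeV Sg (simT A G) (simV A G))).
  - split; auto.
  - split; auto.
  - exact (howe_compatible Sg _ _ ST_refl SV_refl).
Qed.

Lemma open_sim_preadequate : preadequate A G (openT (simT A G)).
Proof.
  intros M N HMN. apply (openT_closed Sg (simT A G)) in HMN.
  eapply rel_mono; [exact HG | | exact (proj1 (sim_is_app_sim Sg T A G HG) _ _ HMN)].
  trivial.
Qed.

End OpenSimilarity.

Theorem mainTheorem10 (Sg : Signature) (T : Monad) (A : CSigAlg Sg T) (G : Relator T)
  (HG : is_relator T G) (Hind : inductive A G) (Hsig : respects_sig A G) :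
  precongruence (openT (simT A G)) (openV (simV A G)) /\
  (forall n (M N : tm Sg n), openT (simT A G) n M N -> ctxT A G n M N) /\
  (forall n (V W : val Sg n), openV (simV A G) n V W -> ctxV A G n V W).
Proof.
  pose proof (open_sim_compatible Sg T A G HG Hind Hsig) as Hcompat.
  pose proof (open_sim_preadequate Sg T A G HG) as Hpre.
  split; [|split].
  - split; [exact Hcompat|]. repeat split.
    + intros n M sigma. apply simT_refl, HG.
    + intros n V sigma. apply simV_refl, HG.
    + intros n M N P HMN HNP sigma. eapply simT_trans; eauto.
    + intros n U V W HUV HVW sigma. eapply simV_trans; eauto.
  - intros n M N HMN. exists (openT (simT A G)), (openV (simV A G)); auto.
  - intros n V W HVW. exists (openT (simT A G)), (openV (simV A G)); auto.
Qed.
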